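(* Let $ABC$ be a triangle with Nagel point $N$. Let $A_0, B_0, C_0$ be the points where the $A$-, $B$-, $C$-excircles touch the sides $BC, CA, AB$ respectively. Let $d>0$ and consider six points $A_1, A_2$ on line $BC$, $B_1, B_2$ on line $CA$, $C_1, C_2$ on line $AB$ such that \[ A_1A_0 = A_2A_0 = B_1B_0 = B_2B_0 = C_1C_0 = C_2C_0 = d, \] where $A_1, B_1, C_1$ lie on the rays $A_0C, B_0A, C_0B$ and $A_2, C_2, B_2$ lie on the rays $A_0B, C_0A, B_0C$ respectively. Then the radical axis of the circumcircles $\odot(A_1B_1C_1)$ and $\odot(A_2B_2C_2)$ passes through the Nagel point $N$, the centroid, and the incenter of $ABC$.
   Context: The Nagel point of $ABC$ is the common point of the lines $AA_0, BB_0, CC_0$ joining each vertex to the touch point of the opposite excircle with the opposite side. *)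

(* Euclidean plane geometry over an ordered field R,
   points are pairs (x, y) in R * R. Everything is expressed with squared
   distances so no square roots are needed. *)
From HB Require Import structures.
From mathcomp Require Import all_boot all_order all_algebra.
Set Implicit Arguments. Unset Strict Implicit. Unset Printing Implicit Defensive.
Import Order.TTheory GRing.Theory Num.Theory.
Local Open Scope ring_scope.

Section Geom.
Variable R : realFieldType.
Definition pt := (R * R)%type.

Definition cross (P Q X : pt) : R :=
  (Q.1 - P.1) * (X.2 - P.2) - (Q.2 - P.2) * (X.1 - P.1).
Definition dot (U V : pt) : R := U.1 * V.1 + U.2 * V.2.
Definition vsub (P Q : pt) : pt := (P.1 - Q.1, P.2 - Q.2).
Definition sqdist (P Q : pt) : R := dot (vsub P Q) (vsub P Q).

Definition on_line (P Q X : pt) : Prop := cross P Q X = 0.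
Definition on_ray (P Q X : pt) : Prop :=
  exists t : R, 0 <= t /\ X = (P.1 + t * (Q.1 - P.1), P.2 + t * (Q.2 - P.2)).
Definition sqdist_line (P Q X : pt) : R := (cross P Q X) ^+ 2 / sqdist P Q.

Definition nondeg_tri (A B C : pt) : Prop := cross A B C != 0.

Definition is_excenter (A B C J : pt) : Prop :=
  sqdist_line B C J = sqdist_line C A J /\
  sqdist_line C A J = sqdist_line A B J /\
  cross B C J * cross B C A < 0.

Definition excircle_touch (A B C X : pt) : Prop :=
  exists J, is_excenter A B C J /\ on_line B C X /\ dot (vsub J X) (vsub C B) = 0.

Definition is_incenter (A B C I : pt) : Prop :=
  sqdist_line B C I = sqdist_line C A I /\
  sqdist_line C A I = sqdist_line A B I /\
  0 < cross B C I * cross B C A /\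
  0 < cross C A I * cross C A B /\
  0 < cross A B I * cross A B C.

Definition centroid (A B C : pt) : pt :=
  ((A.1 + B.1 + C.1) / 3%:R, (A.2 + B.2 + C.2) / 3%:R).

Definition is_circumcenter (P Q S O : pt) : Prop :=
  sqdist O P = sqdist O Q /\ sqdist O Q = sqdist O S.

Definition power (O P X : pt) : R := sqdist X O - sqdist P O.

Definition on_radical_axis (O1 P1 O2 P2 X : pt) : Prop :=
  power O1 P1 X = power O2 P2 X.
End Geom.

From mathcomp Require Import all_boot all_order all_algebra.
From mathcomp Require Import ring lra.
Import Order.TTheory GRing.Theory Num.Theory.
Local Open Scope ring_scope.
Set Implicit Arguments. Unset Strict Implicit. Unset Printing Implicit Defensive.

(* Everything is computed in barycentric coordinates with respect to ABC, with
   side lengths a, b, c and semiperimeter s.  The excircle touch points are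
   A0 = (0 : s - b : s - c) and its rotations, which makes A1, ..., C2 explicit;
   the incenter is (a : b : c), the centroid G is (1 : 1 : 1) and the Nagel
   point (s - a : s - b : s - c) is 3 G - 2 I, so all three lie on the line
   G + t (I - G).  The power of X with respect to the circumcircle of PQS is
   - (y z |QS|^2 + z x |SP|^2 + x y |PQ|^2), where (x, y, z) are the
   barycentric coordinates of X relative to PQS; with this formula the two
   powers agree along the whole line by a rational identity in a, b, c, d, t. *)

Section Barycentric.
Variable R : realFieldType.
Implicit Types (A B C X : pt R).

Definition bary A B C (u v w : R) : pt R :=
  (u * A.1 + v * B.1 + w * C.1, u * A.2 + v * B.2 + w * C.2).

Definition det3 (u1 v1 w1 u2 v2 w2 u3 v3 w3 : R) : R :=
  u1 * (v2 * w3 - w2 * v3) - v1 * (u2 * w3 - w2 * u3) + w1 * (u2 * v3 - v2 * u3).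

Lemma bary_rot A B C u v w : bary B C A u v w = bary A B C w u v.
Proof. by rewrite /bary; congr pair; ring. Qed.

Lemma bary100 A B C : bary A B C 1 0 0 = A.
Proof. by case: A => x y; rewrite /bary /=; congr pair; ring. Qed.

Lemma bary001 A B C : bary A B C 0 0 1 = C.
Proof. by case: C => x y; rewrite /bary /=; congr pair; ring. Qed.

Lemma bary010 A B C : bary A B C 0 1 0 = B.
Proof. by rewrite -bary_rot bary100. Qed.

Lemma centroid_bary A B C :
  centroid A B C = bary A B C (1 / 3%:R) (1 / 3%:R) (1 / 3%:R).
Proof. by rewrite /centroid /bary; congr pair; field. Qed.

Lemma cross_rot A B C : cross B C A = cross A B C.
Proof. by rewrite /cross; ring. Qed.

Lemma cross_cyclic_sum A B C X :
  cross B C X + cross C A X + cross A B X = cross A B C.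
Proof. by rewrite /cross; ring. Qed.

Lemma cross_bary A B C u1 v1 w1 u2 v2 w2 u3 v3 w3 :
  u1 + v1 + w1 = 1 -> u2 + v2 + w2 = 1 -> u3 + v3 + w3 = 1 ->
  cross (bary A B C u1 v1 w1) (bary A B C u2 v2 w2) (bary A B C u3 v3 w3) =
  det3 u1 v1 w1 u2 v2 w2 u3 v3 w3 * cross A B C.
Proof.
move=> h1 h2 h3.
have -> : w1 = 1 - u1 - v1 by rewrite -h1; ring.
have -> : w2 = 1 - u2 - v2 by rewrite -h2; ring.
have -> : w3 = 1 - u3 - v3 by rewrite -h3; ring.
by rewrite /cross /bary /det3 /=; ring.
Qed.

Lemma bary_on_line A B C v w : v + w = 1 -> on_line B C (bary A B C 0 v w).
Proof.
move=> h; have -> : w = 1 - v by rewrite -h; ring.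
by rewrite /on_line /cross /bary /=; ring.
Qed.

Lemma cross_cevian A B C X v w : v + w = 1 ->
  cross A (bary A B C 0 v w) X = v * cross A B X - w * cross C A X.
Proof.
move=> h; have -> : w = 1 - v by rewrite -h; ring.
by rewrite /cross /bary /=; ring.
Qed.

Lemma dot_vsub_bary A B C u1 v1 w1 u2 v2 w2 u3 v3 w3 u4 v4 w4 :
  u1 + v1 + w1 = 1 -> u2 + v2 + w2 = 1 -> u3 + v3 + w3 = 1 -> u4 + v4 + w4 = 1 ->
  dot (vsub (bary A B C u1 v1 w1) (bary A B C u2 v2 w2))
      (vsub (bary A B C u3 v3 w3) (bary A B C u4 v4 w4)) =
  - (((v1 - v2) * (w3 - w4) + (w1 - w2) * (v3 - v4)) * sqdist B C
     + ((w1 - w2) * (u3 - u4) + (u1 - u2) * (w3 - w4)) * sqdist C A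
     + ((u1 - u2) * (v3 - v4) + (v1 - v2) * (u3 - u4)) * sqdist A B) / 2%:R.
Proof.
move=> h1 h2 h3 h4.
have -> : w1 = 1 - u1 - v1 by rewrite -h1; ring.
have -> : w2 = 1 - u2 - v2 by rewrite -h2; ring.
have -> : w3 = 1 - u3 - v3 by rewrite -h3; ring.
have -> : w4 = 1 - u4 - v4 by rewrite -h4; ring.
by rewrite /sqdist /dot /vsub /bary /=; field.
Qed.

Lemma sqdist_bary A B C u1 v1 w1 u2 v2 w2 :
  u1 + v1 + w1 = 1 -> u2 + v2 + w2 = 1 ->
  sqdist (bary A B C u1 v1 w1) (bary A B C u2 v2 w2) =
  - ((v1 - v2) * (w1 - w2) * sqdist B C + (w1 - w2) * (u1 - u2) * sqdist C A
     + (u1 - u2) * (v1 - v2) * sqdist A B).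
Proof. by move=> h1 h2; rewrite {1}/sqdist dot_vsub_bary //; field. Qed.

Lemma bary_of_cross A B C X : cross A B C != 0 ->
  X = bary A B C (cross B C X / cross A B C) (cross C A X / cross A B C)
                 (cross A B X / cross A B C).
Proof. by case: X => x1 x2; rewrite /bary /cross /= => hD; congr pair; field. Qed.

Lemma bary_of_proportional_cross A B C X (u v w p : R) : cross A B C != 0 ->
  cross B C X = u * p -> cross C A X = v * p -> cross A B X = w * p ->
  X = bary A B C (u / (u + v + w)) (v / (u + v + w)) (w / (u + v + w)).
Proof.
move=> hD hu hv hw.
have hs : cross A B C = (u + v + w) * p by rewrite -(cross_cyclic_sum A B C X) hu hv hw; ring.
have p_neq0 : p != 0 by apply: contraNneq hD => p0; rewrite hs p0 mulr0.
have s_neq0 : u + v + w != 0 by apply: contraNneq hD => s0; rewrite hs s0 mul0r.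
by rewrite {1}(bary_of_cross X hD) hu hv hw hs; congr bary; field; rewrite p_neq0 s_neq0.
Qed.

End Barycentric.

Section Euclid.
Variable R : realFieldType.
Implicit Types (A B C P Q S O X Y J : pt R).

Lemma sqdistC P Q : sqdist P Q = sqdist Q P.
Proof. by rewrite /sqdist /dot /vsub /=; ring. Qed.

Lemma lagrange_identity P Q X :
  sqdist P Q * sqdist P X = dot (vsub X P) (vsub Q P) ^+ 2 + cross P Q X ^+ 2.
Proof. by rewrite /sqdist /dot /vsub /cross /=; ring. Qed.

Lemma sqdist_neq0 P Q X : cross P Q X != 0 -> sqdist P Q != 0.
Proof.
apply: contraNneq => PQ0; have := lagrange_identity P Q X.
by rewrite PQ0 mul0r => /esym/eqP; rewrite paddr_eq0 ?sqr_ge0 // !sqrf_eq0 => /andP[_].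
Qed.

Lemma perp_foot_unique B C J X Y : sqdist B C != 0 ->
  on_line B C X -> on_line B C Y ->
  dot (vsub J X) (vsub C B) = 0 -> dot (vsub J Y) (vsub C B) = 0 -> X = Y.
Proof.
rewrite /on_line => BC0 hX hY pX pY.
have e1 : sqdist B C * (X.1 - Y.1) = 0.
  transitivity ((dot (vsub J Y) (vsub C B) - dot (vsub J X) (vsub C B)) * (C.1 - B.1)
                - (cross B C X - cross B C Y) * (C.2 - B.2)).
    by rewrite /sqdist /dot /vsub /cross /=; ring.
  by rewrite hX hY pX pY; ring.
have e2 : sqdist B C * (X.2 - Y.2) = 0.
  transitivity ((dot (vsub J Y) (vsub C B) - dot (vsub J X) (vsub C B)) * (C.2 - B.2)
                + (cross B C X - cross B C Y) * (C.1 - B.1)).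
    by rewrite /sqdist /dot /vsub /cross /=; ring.
  by rewrite hX hY pX pY; ring.
move/eqP: e1; move/eqP: e2; rewrite !mulf_eq0 (negbTE BC0) !subr_eq0 /=.
by case: X Y {hX hY pX pY} => [x1 x2] [y1 y2] /= /eqP-> /eqP->.
Qed.

Lemma on_ray_at_dist P Q X (d l : R) : 0 < d -> 0 < l -> sqdist Q P = l ^+ 2 ->
  on_ray P Q X -> sqdist X P = d ^+ 2 ->
  X = (P.1 + d / l * (Q.1 - P.1), P.2 + d / l * (Q.2 - P.2)).
Proof.
move=> d_gt0 l_gt0 hl [t [t_ge0 ->]].
have -> : sqdist (P.1 + t * (Q.1 - P.1), P.2 + t * (Q.2 - P.2)) P = (t * l) ^+ 2.
  by rewrite exprMn -hl /sqdist /dot /vsub /=; ring.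
move/eqP; rewrite eqrXn2 ?(mulr_ge0 t_ge0 (ltW l_gt0)) ?(ltW d_gt0) // => /eqP tl_d.
by rewrite -tl_d mulfK ?gt_eqF.
Qed.

Lemma on_ray_bary A B C P Q X u1 v1 w1 u2 v2 w2 (d l : R) : 0 < d -> 0 < l ->
  P = bary A B C u1 v1 w1 -> Q = bary A B C u2 v2 w2 -> sqdist Q P = l ^+ 2 ->
  on_ray P Q X -> sqdist X P = d ^+ 2 ->
  X = bary A B C (u1 + d / l * (u2 - u1)) (v1 + d / l * (v2 - v1)) (w1 + d / l * (w2 - w1)).
Proof.
move=> d_gt0 l_gt0 eP eQ hl hX dX; rewrite (on_ray_at_dist d_gt0 l_gt0 hl hX dX) eP eQ.
by rewrite /bary /=; congr pair; ring.
Qed.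

(* [R] need not have square roots: the length of [PQ] is recovered from the
   segment [XY] of known length [d] on the same line. *)
Lemma exists_sqrt_sqdist P Q X Y (d : R) : 0 < d -> sqdist P Q != 0 ->
  on_line P Q X -> on_ray X P Y -> sqdist Y X = d ^+ 2 ->
  exists l : R, 0 < l /\ l ^+ 2 = sqdist P Q.
Proof.
move=> d_gt0 PQ0 hX [t [t_ge0 ->]] hY.
set m := dot (vsub X P) (vsub Q P).
have PQ_PX : sqdist P Q * sqdist P X = m ^+ 2.
  by rewrite lagrange_identity hX expr0n addr0.
have dY : d ^+ 2 = t ^+ 2 * sqdist P X.
  by rewrite -hY /sqdist /dot /vsub /=; ring.
have tm_sq : (t * m) ^+ 2 = sqdist P Q * d ^+ 2.
  by rewrite exprMn -PQ_PX dY; ring.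
have tm0 : t * m != 0.
  apply: contraNneq PQ0 => tm0; move: tm_sq; rewrite tm0 expr0n /= => /esym/eqP.
  by rewrite mulf_eq0 expf_eq0 /= (gt_eqF d_gt0) orbF.
exists (`|t * m| / d); split; first by rewrite divr_gt0 ?normr_gt0.
by rewrite expr_div_n real_normK ?num_real // tm_sq mulfK // expf_neq0 // gt_eqF.
Qed.

Lemma excircle_touch_on_line A B C X : excircle_touch A B C X -> on_line B C X.
Proof. by case=> J [_ []]. Qed.

Lemma side_lt_add A B C (a b c : R) : cross A B C != 0 ->
  0 < a -> 0 < b -> 0 < c ->
  a ^+ 2 = sqdist B C -> b ^+ 2 = sqdist C A -> c ^+ 2 = sqdist A B -> a < b + c.
Proof.
move=> hD a_gt0 b_gt0 c_gt0 sqa sqb sqc.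
set e := dot (vsub C A) (vsub B A).
have cosine_law : a ^+ 2 = b ^+ 2 + c ^+ 2 - 2 * e.
  by rewrite sqa sqb sqc /e /sqdist /dot /vsub /=; ring.
have bc_sq : (b * c) ^+ 2 = e ^+ 2 + cross A B C ^+ 2.
  by rewrite exprMn sqb sqc sqdistC mulrC lagrange_identity.
have D_gt0 : 0 < cross A B C ^+ 2 by rewrite exprn_even_gt0.
have bc_gt0 : 0 < b * c by rewrite mulr_gt0.
have e_gt : - (b * c) < e by nra.
nra.
Qed.

Definition circle_power_num P Q S X : R :=
  cross X Q S * cross P X S * sqdist P Q + cross P X S * cross P Q X * sqdist Q S
  + cross X Q S * cross P Q X * sqdist P S.

Lemma circumcenter_power P Q S O X : is_circumcenter P Q S O ->
  power O P X * cross P Q S ^+ 2 = - circle_power_num P Q S X.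
Proof.
case=> OPQ OQS; apply/eqP; rewrite -addr_eq0; apply/eqP.
transitivity (cross P X S * cross P Q S * (sqdist O Q - sqdist O P)
              + cross P Q X * cross P Q S * (sqdist O S - sqdist O P)).
  move: P Q S O X {OPQ OQS} => [p1 p2] [q1 q2] [s1 s2] [o1 o2] [x1 x2].
  by rewrite /circle_power_num /power /sqdist /cross /dot /vsub /=; ring.
by rewrite -OQS OPQ !subrr !mulr0 addr0.
Qed.

Lemma radical_axis_of_power_num P1 Q1 S1 O1 P2 Q2 S2 O2 X :
  is_circumcenter P1 Q1 S1 O1 -> is_circumcenter P2 Q2 S2 O2 ->
  cross P1 Q1 S1 != 0 -> cross P2 Q2 S2 != 0 ->
  circle_power_num P1 Q1 S1 X * cross P2 Q2 S2 ^+ 2 =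
    circle_power_num P2 Q2 S2 X * cross P1 Q1 S1 ^+ 2 ->
  on_radical_axis O1 P1 O2 P2 X.
Proof.
move=> h1 h2 D1 D2 e; rewrite /on_radical_axis.
rewrite -[power O1 P1 X](mulfK (expf_neq0 2 D1)) -[power O2 P2 X](mulfK (expf_neq0 2 D2)).
rewrite !circumcenter_power //; apply/eqP; rewrite eqr_div ?expf_neq0 //.
by rewrite !mulNr e.
Qed.

End Euclid.

Section TouchPoints.
Variables (R : realFieldType) (A B C : pt R) (a b c : R).
Hypotheses (ABC_nondeg : cross A B C != 0) (a_gt0 : 0 < a) (b_gt0 : 0 < b) (c_gt0 : 0 < c).
Hypotheses (sqa : a ^+ 2 = sqdist B C) (sqb : b ^+ 2 = sqdist C A) (sqc : c ^+ 2 = sqdist A B).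

Lemma tangent_lengths_gt0 : [/\ 0 < b + c - a, 0 < a + c - b & 0 < a + b - c].
Proof.
rewrite !subr_gt0; split.
- exact: side_lt_add ABC_nondeg a_gt0 b_gt0 c_gt0 sqa sqb sqc.
- by rewrite addrC; apply: (side_lt_add _ b_gt0 c_gt0 a_gt0 sqb sqc sqa); rewrite cross_rot.
- apply: (side_lt_add _ c_gt0 a_gt0 b_gt0 sqc sqa sqb).
  by rewrite (cross_rot B C A) cross_rot.
Qed.

Lemma equidistant_cross J :
  sqdist_line B C J = sqdist_line C A J -> sqdist_line C A J = sqdist_line A B J ->
  exists p, [/\ cross B C J = a * p,
                cross C A J = b * p \/ cross C A J = - b * p &
                cross A B J = c * p \/ cross A B J = - c * p].
Proof.
rewrite /sqdist_line -sqa -sqb -sqc -!expr_div_n => e1 e2.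
have signed (k x y : R) : 0 < k -> (x / k) ^+ 2 = y ^+ 2 -> x = k * y \/ x = - k * y.
  move=> k_gt0 /esym/eqP; rewrite eqf_sqr => /orP[] /eqP ->; [left | right];
    by field; rewrite gt_eqF.
exists (cross B C J / a); split.
- by field; rewrite gt_eqF.
- by apply: signed => //; rewrite -e1.
- by apply: signed => //; rewrite -e2 -e1.
Qed.

Lemma incenter_bary I : is_incenter A B C I ->
  I = bary A B C (a / (a + b + c)) (b / (a + b + c)) (c / (a + b + c)).
Proof.
case=> e1 [e2 [s1 [s2 s3]]].
have [p [ea eb ec]] := equidistant_cross e1 e2.
rewrite (cross_rot A B C) ea in s1; rewrite (cross_rot B C A) (cross_rot A B C) in s2.
have pD_gt0 : 0 < p * cross A B C by move: s1; rewrite -mulrA pmulr_rgt0.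
have neg_side k : 0 < k -> 0 < - k * p * cross A B C -> False.
  by move=> k_gt0; have := mulr_gt0 k_gt0 pD_gt0; lra.
apply: (bary_of_proportional_cross ABC_nondeg ea).
- by case: eb => // eb; move: s2; rewrite eb => /(neg_side _ b_gt0).
- by case: ec => // ec; move: s3; rewrite ec => /(neg_side _ c_gt0).
Qed.

Lemma excenter_bary J : is_excenter A B C J ->
  J = bary A B C (a / (a - b - c)) (- b / (a - b - c)) (- c / (a - b - c)).
Proof.
case=> e1 [e2 s].
have [p [ea eb ec]] := equidistant_cross e1 e2.
have [_ sb_gt0 sc_gt0] := tangent_lengths_gt0.
rewrite (cross_rot A B C) -(cross_cyclic_sum A B C J) ea in s.
have pos_side k : 0 < a + k -> 0 <= a * p * (a * p + k * p).
  by move=> ak_gt0; rewrite -mulrDl mulrACA -expr2 mulr_ge0 ?sqr_ge0 // mulr_ge0 // ltW.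
move: s; case: eb => eb; case: ec => ec; rewrite eb ec => s;
  last exact: bary_of_proportional_cross ABC_nondeg ea eb ec.
all: exfalso.
- have /pos_side : 0 < a + (b + c) by rewrite !addr_gt0.
  lra.
- have /pos_side : 0 < a + (b - c) by rewrite addrA.
  lra.
- have /pos_side : 0 < a + (c - b) by rewrite addrA.
  lra.
Qed.

Lemma excircle_touch_bary X : excircle_touch A B C X ->
  X = bary A B C 0 ((a + c - b) / (2%:R * a)) ((a + b - c) / (2%:R * a)).
Proof.
case=> J [/excenter_bary eJ [hX hperp]].
have [sa_gt0 _ _] := tangent_lengths_gt0.
have BC0 : sqdist B C != 0 by rewrite -sqa expf_neq0 // gt_eqF.
have abc0 : a - b - c != 0 by rewrite lt_eqF // -addrA -opprD subr_lt0 -subr_gt0.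
apply: (perp_foot_unique BC0 hX _ hperp); first by apply: bary_on_line; field; rewrite gt_eqF.
have -> : vsub C B = vsub (bary A B C 0 0 1) (bary A B C 0 1 0) by rewrite bary001 bary010.
by rewrite eJ dot_vsub_bary -?sqa -?sqb -?sqc; try by field; rewrite ?abc0 ?gt_eqF.
Qed.

Lemma touch_ray_bary (d : R) A0 A1 A2 : 0 < d -> excircle_touch A B C A0 ->
  on_ray A0 C A1 -> sqdist A1 A0 = d ^+ 2 -> on_ray A0 B A2 -> sqdist A2 A0 = d ^+ 2 ->
  A1 = bary A B C 0 (((a + c - b) / 2%:R - d) / a) (((a + b - c) / 2%:R + d) / a) /\
  A2 = bary A B C 0 (((a + c - b) / 2%:R + d) / a) (((a + b - c) / 2%:R - d) / a).
Proof.
move=> d_gt0 /excircle_touch_bary eA0 hA1 dA1 hA2 dA2.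
have [_ sb_gt0 sc_gt0] := tangent_lengths_gt0.
have y_gt0 : 0 < (a + c - b) / 2%:R by rewrite divr_gt0.
have z_gt0 : 0 < (a + b - c) / 2%:R by rewrite divr_gt0.
have CA0 : sqdist C A0 = ((a + c - b) / 2%:R) ^+ 2.
  rewrite eA0 -[X in sqdist X _](bary001 A B C) sqdist_bary -?sqa -?sqb -?sqc;
    try by field; rewrite gt_eqF.
  by rewrite !add0r.
have BA0 : sqdist B A0 = ((a + b - c) / 2%:R) ^+ 2.
  rewrite eA0 -[X in sqdist X _](bary010 A B C) sqdist_bary -?sqa -?sqb -?sqc;
    try by field; rewrite gt_eqF.
  by rewrite add0r addr0.
split.
- rewrite (on_ray_bary d_gt0 y_gt0 eA0 (esym (bary001 A B C)) CA0 hA1 dA1).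
  by congr bary; field; rewrite ?gt_eqF.
- rewrite (on_ray_bary d_gt0 z_gt0 eA0 (esym (bary010 A B C)) BA0 hA2 dA2).
  by congr bary; field; rewrite ?gt_eqF.
Qed.

End TouchPoints.

Section NagelLine.
Variables (R : realFieldType) (A B C : pt R) (a b c : R).
Hypotheses (ABC_nondeg : cross A B C != 0) (a_gt0 : 0 < a) (b_gt0 : 0 < b) (c_gt0 : 0 < c).
Hypotheses (sqa : a ^+ 2 = sqdist B C) (sqb : b ^+ 2 = sqdist C A) (sqc : c ^+ 2 = sqdist A B).

Definition nagel_line (t : R) : pt R :=
  let s := a + b + c in
  bary A B C ((1 - t) / 3%:R + t * a / s) ((1 - t) / 3%:R + t * b / s)
             ((1 - t) / 3%:R + t * c / s).

Lemma centroid_on_nagel_line : centroid A B C = nagel_line 0.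
Proof. by rewrite centroid_bary /nagel_line; congr bary; ring. Qed.

Lemma incenter_on_nagel_line I : is_incenter A B C I -> I = nagel_line 1.
Proof.
move=> /(incenter_bary ABC_nondeg a_gt0 b_gt0 c_gt0 sqa sqb sqc) ->.
by rewrite /nagel_line; congr bary; field; rewrite gt_eqF // !addr_gt0.
Qed.

Lemma nagel_point_on_nagel_line A0 B0 N :
  excircle_touch A B C A0 -> excircle_touch B C A B0 ->
  on_line A A0 N -> on_line B B0 N -> N = nagel_line (-2).
Proof.
have BCA_nondeg : cross B C A != 0 by rewrite cross_rot.
have [_ _ sc_gt0] := tangent_lengths_gt0 ABC_nondeg a_gt0 b_gt0 c_gt0 sqa sqb sqc.
move=> /(excircle_touch_bary ABC_nondeg a_gt0 b_gt0 c_gt0 sqa sqb sqc) ->.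
move=> /(excircle_touch_bary BCA_nondeg b_gt0 c_gt0 a_gt0 sqb sqc sqa) ->.
rewrite /on_line !cross_cevian; try by field; rewrite gt_eqF.
move=> /subr0_eq onA /subr0_eq onB.
set p := cross A B N / (a + b - c).
have eAB : cross A B N = (a + b - c) * p by rewrite /p; field; rewrite gt_eqF.
have eCA : cross C A N = (a + c - b) * p.
  apply: (@mulfI _ ((a + b - c) / (2%:R * a))); first by rewrite gt_eqF // divr_gt0 // mulr_gt0.
  by rewrite -onA eAB; field; rewrite gt_eqF.
have eBC : cross B C N = (b + c - a) * p.
  have sc'_gt0 : 0 < b + a - c by rewrite (addrC b).
  apply: (@mulfI _ ((b + a - c) / (2%:R * b))); first by rewrite gt_eqF // divr_gt0 // mulr_gt0.
  by rewrite onB eAB; field; rewrite !gt_eqF.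
rewrite (bary_of_proportional_cross ABC_nondeg eBC eCA eAB) /nagel_line.
by congr bary; field; rewrite gt_eqF // !addr_gt0.
Qed.

(* The six points are given relative to the rotated triangles, as
   [touch_ray_bary] produces them. *)
Lemma nagel_line_radical_axis (d t : R) A1 A2 B1 B2 C1 C2 O1 O2 :
  A1 = bary A B C 0 (((a + c - b) / 2%:R - d) / a) (((a + b - c) / 2%:R + d) / a) ->
  A2 = bary A B C 0 (((a + c - b) / 2%:R + d) / a) (((a + b - c) / 2%:R - d) / a) ->
  B1 = bary B C A 0 (((b + a - c) / 2%:R - d) / b) (((b + c - a) / 2%:R + d) / b) ->
  B2 = bary B C A 0 (((b + a - c) / 2%:R + d) / b) (((b + c - a) / 2%:R - d) / b) ->
  C1 = bary C A B 0 (((c + b - a) / 2%:R - d) / c) (((c + a - b) / 2%:R + d) / c) ->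
  C2 = bary C A B 0 (((c + b - a) / 2%:R + d) / c) (((c + a - b) / 2%:R - d) / c) ->
  cross A1 B1 C1 != 0 -> cross A2 B2 C2 != 0 ->
  is_circumcenter A1 B1 C1 O1 -> is_circumcenter A2 B2 C2 O2 ->
  on_radical_axis O1 A1 O2 A2 (nagel_line t).
Proof.
rewrite !(bary_rot B C A) !(bary_rot A B C).
move=> -> -> -> -> -> -> nd1 nd2 O1_circ O2_circ.
apply: radical_axis_of_power_num O1_circ O2_circ nd1 nd2 _.
have s_neq0 : a + b + c != 0 by rewrite gt_eqF // !addr_gt0.
rewrite /nagel_line /circle_power_num !cross_bary; try by field; rewrite ?s_neq0 ?gt_eqF.
rewrite !sqdist_bary; try by field; rewrite ?s_neq0 ?gt_eqF.
by rewrite -sqa -sqb -sqc /det3; field; rewrite ?s_neq0 ?gt_eqF.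
Qed.

End NagelLine.

Theorem theorem1p1 (R : realFieldType)
  (A B C A0 B0 C0 N I : pt R) (d : R)
  (A1 A2 B1 B2 C1 C2 O1 O2 : pt R) :
  nondeg_tri A B C ->
  excircle_touch A B C A0 -> excircle_touch B C A B0 -> excircle_touch C A B C0 ->
  on_line A A0 N -> on_line B B0 N -> on_line C C0 N ->
  is_incenter A B C I ->
  0 < d ->
  on_ray A0 C A1 -> on_ray B0 A B1 -> on_ray C0 B C1 ->
  on_ray A0 B A2 -> on_ray B0 C B2 -> on_ray C0 A C2 ->
  sqdist A1 A0 = d ^+ 2 -> sqdist A2 A0 = d ^+ 2 ->
  sqdist B1 B0 = d ^+ 2 -> sqdist B2 B0 = d ^+ 2 ->
  sqdist C1 C0 = d ^+ 2 -> sqdist C2 C0 = d ^+ 2 ->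
  nondeg_tri A1 B1 C1 -> nondeg_tri A2 B2 C2 ->
  is_circumcenter A1 B1 C1 O1 -> is_circumcenter A2 B2 C2 O2 ->
  on_radical_axis O1 A1 O2 A2 N /\
  on_radical_axis O1 A1 O2 A2 (centroid A B C) /\
  on_radical_axis O1 A1 O2 A2 I.
Proof.
(* The cevians from A and B already determine N. *)
move=> ABC_nondeg hA0 hB0 hC0 onAA0 onBB0 _ hI d_gt0 hA1 hB1 hC1 hA2 hB2 hC2
  dA1 dA2 dB1 dB2 dC1 dC2 nd1 nd2 O1_circ O2_circ.
have BCA_nondeg : cross B C A != 0 by rewrite cross_rot.
have CAB_nondeg : cross C A B != 0 by rewrite (cross_rot B C A) cross_rot.
have [a [a_gt0 sqa]] := exists_sqrt_sqdist d_gt0 (sqdist_neq0 BCA_nondeg)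
  (excircle_touch_on_line hA0) hA2 dA2.
have [b [b_gt0 sqb]] := exists_sqrt_sqdist d_gt0 (sqdist_neq0 CAB_nondeg)
  (excircle_touch_on_line hB0) hB2 dB2.
have [c [c_gt0 sqc]] := exists_sqrt_sqdist d_gt0 (sqdist_neq0 ABC_nondeg)
  (excircle_touch_on_line hC0) hC2 dC2.
have [eA1 eA2] := touch_ray_bary ABC_nondeg a_gt0 b_gt0 c_gt0 sqa sqb sqc d_gt0 hA0 hA1 dA1 hA2 dA2.
have [eB1 eB2] := touch_ray_bary BCA_nondeg b_gt0 c_gt0 a_gt0 sqb sqc sqa d_gt0 hB0 hB1 dB1 hB2 dB2.
have [eC1 eC2] := touch_ray_bary CAB_nondeg c_gt0 a_gt0 b_gt0 sqc sqa sqb d_gt0 hC0 hC1 dC1 hC2 dC2.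
have on_axis t := nagel_line_radical_axis a_gt0 b_gt0 c_gt0 sqa sqb sqc t
  eA1 eA2 eB1 eB2 eC1 eC2 nd1 nd2 O1_circ O2_circ.
rewrite (nagel_point_on_nagel_line ABC_nondeg a_gt0 b_gt0 c_gt0 sqa sqb sqc hA0 hB0 onAA0 onBB0).
rewrite (incenter_on_nagel_line ABC_nondeg a_gt0 b_gt0 c_gt0 sqa sqb sqc hI).
by rewrite (centroid_on_nagel_line A B C a b c); split; [|split]; apply: on_axis.
Qed.
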